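(* The tenth order mock theta function $\psi_{10}(q)=\sum_{n\ge0}\frac{q^{\binom{n+1}2}}{(q;q^2)_n}$ is the generating function $\sum_\pi q^{|\pi|}$ over partitions $\pi$ with $n$ copies of $n$ (including the empty one) in which, with parts in ascending lexicographic order, the weighted difference between each part and the preceding one is exactly $-1$, and the smallest part is of the form $j_j$.
   Context: $M=\{m_i: 1\le i\le m\}$; a partition with $n$ copies of $n$ is a finite multiset of elements of $M$, $|\pi|$ the sum of values. Lexicographic order: $m_i>n_j$ iff $m>n$, or $m=n$ and $i>j$. Weighted difference $((m_i-n_j))=m-n-i-j$. $(a;q)_n=\prod_{j=0}^{n-1}(1-aq^j)$. *)

From mathcomp Require Import all_boot all_order all_algebra.
Set Implicit Arguments. Unset Strict Implicit. Unset Printing Implicit Defensive.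
Import Order.TTheory GRing.Theory Num.Theory.

(* A part m_i of a partition with n copies of n is the pair (m, i), 1 <= i <= m. *)
Definition part := (nat * nat)%type.

Definition is_part (a : part) : bool := (0 < a.2) && (a.2 <= a.1).

Definition lexle (a b : part) : bool :=
  (a.1 < b.1) || ((a.1 == b.1) && (a.2 <= b.2)).

Definition wdiff (a b : part) : int :=
  (a.1%:Z - b.1%:Z - a.2%:Z - b.2%:Z)%R.

(* A partition with n copies of n (a finite multiset of parts) is represented
   canonically by the list of its parts in ascending lexicographic order. *)
Definition ncopy_partition (p : seq part) : bool :=
  all is_part p && sorted lexle p.

Definition weight (p : seq part) : nat := \sum_(a <- p) a.1.

Fixpoint consec_wdiff_m1 (p : seq part) : bool :=
  match p with
  | a :: ((b :: _) as t) => (wdiff b a == (-1)%R) && consec_wdiff_m1 t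
  | _ => true
  end.

Definition smallest_diag (p : seq part) : bool :=
  match p with
  | a :: _ => a.1 == a.2
  | [::] => true
  end.

Definition psi10_partition (p : seq part) : bool :=
  [&& ncopy_partition p, consec_wdiff_m1 p & smallest_diag p].

(* psi_10(q) = sum_{n>=0} q^{C(n+1,2)} / (q;q^2)_n, with
   1/(q;q^2)_n = prod_{j<n} 1/(1 - q^{2j+1}) = prod_{j<n} sum_{k>=0} q^{(2j+1)k}.
   psi10_trunc N is a polynomial agreeing with psi_10 in all coefficients of
   degree <= N (terms with n > N or k > N only contribute degrees > N). *)
Definition psi10_trunc (N : nat) : {poly int} :=
  (\sum_(n < N.+1)
     'X^('C(n.+1, 2)) * \prod_(j < n) \sum_(k < N.+1) 'X^((2 * j + 1) * k))%R.

Definition psi10_coeff (N : nat) : int := (psi10_trunc N)`_N.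

From mathcomp Require Import all_boot all_order all_algebra zify.
Import Order.TTheory GRing.Theory Num.Theory.

(* A psi_10-partition m1_(i1) < ... < mn_(in) is determined by
   its "code" (i1 - 1, ..., in - 1): the first part is diagonal, m1 = i1,
   and the weighted difference condition forces m(k+1) = mk + ik + i(k+1) - 1.
   Conversely every sequence of naturals d1 ... dn decodes to such a
   partition, whose weight is C(n+1, 2) + sum_k dk (2(n-k) + 1).
   On the series side, expanding each factor 1/(1 - q^(2j+1)) of
   q^C(n+1,2) / (q;q^2)_n shows that the coefficient of q^N in the
   truncation psi10_trunc N counts exactly the codes of length <= N, with
   entries <= N, of that weight N. *)

(* The weight contributed by a code beyond the staircase C(n+1, 2): an entry
   d followed by t further entries is counted 2t + 1 times. *)
Fixpoint code_excess (ds : seq nat) : nat :=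
  if ds is d :: t then (d * (2 * size t + 1) + code_excess t)%N else 0%N.

Definition code_weight (ds : seq nat) : nat :=
  ('C((size ds).+1, 2) + code_excess ds)%N.

(* Decoding after a given previous part: the next part has copy index d+1
   and the unique value giving weighted difference -1 with [prev]. *)
Fixpoint decode_from (prev : part) (ds : seq nat) : seq part :=
  if ds is d :: t then
    let a := ((prev.1 + prev.2 + d)%N, d.+1) in a :: decode_from a t
  else [::].

Definition decode (ds : seq nat) : seq part :=
  if ds is d :: t then (d.+1, d.+1) :: decode_from (d.+1, d.+1) t else [::].

Definition code (p : seq part) : seq nat := map (fun a => a.2.-1) p.

Section Coding.

Lemma weight_cons (a : part) (p : seq part) :
  weight (a :: p) = (a.1 + weight p)%N.
Proof. by rewrite /weight big_cons. Qed.

Lemma decode_from_ok (prev : part) (ds : seq nat) : is_part prev ->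
  [&& path lexle prev (decode_from prev ds),
      consec_wdiff_m1 (prev :: decode_from prev ds) &
      all is_part (decode_from prev ds)].
Proof.
elim: ds prev => [|d ds IH] [m c] //=; rewrite /is_part /= => /andP[c0 cm].
have next_part : is_part (m + c + d, d.+1)%N by rewrite /is_part /=; lia.
have /and3P[-> /= -> ->] := IH _ next_part.
have -> : lexle (m, c) (m + c + d, d.+1)%N by rewrite /lexle /=; lia.
have -> : wdiff (m + c + d, d.+1)%N (m, c) == (-1)%R.
  by rewrite /wdiff /=; apply/eqP; lia.
by rewrite /=; lia.
Qed.

Lemma decode_ok (ds : seq nat) : psi10_partition (decode ds).
Proof.
case: ds => [|d ds] //=.
have diag_part : is_part (d.+1, d.+1) by rewrite /is_part /= leqnn.
have /and3P[h_sorted h_wdiff h_parts] := decode_from_ok _ ds diag_part.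
rewrite /psi10_partition /ncopy_partition h_wdiff /=.
by rewrite diag_part h_sorted h_parts eqxx.
Qed.

Lemma weight_decode_from (prev : part) (ds : seq nat) :
  weight (decode_from prev ds) =
  (size ds * (prev.1 + prev.2) + 'C(size ds, 2) + code_excess ds)%N.
Proof.
elim: ds prev => [|d ds IH] [m c] /=; first by rewrite /weight big_nil.
by rewrite weight_cons IH /= binS bin1; nia.
Qed.

Lemma weight_decode (ds : seq nat) : weight (decode ds) = code_weight ds.
Proof.
case: ds => [|d ds]; first by rewrite /weight big_nil.
by rewrite /= weight_cons weight_decode_from /code_weight /= !binS bin1 bin0; nia.
Qed.

Lemma code_decode (ds : seq nat) : code (decode ds) = ds.
Proof.
have code_from prev es : code (decode_from prev es) = es.
  by elim: es prev => [|e es IH] prev //=; rewrite IH.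
by case: ds => [|d ds] //=; rewrite code_from.
Qed.

Lemma decode_from_code (prev : part) (p : seq part) :
  all is_part p -> consec_wdiff_m1 (prev :: p) -> decode_from prev (code p) = p.
Proof.
elim: p prev => [|[m i] p IH] [m0 i0] //= /andP[ha hp] /andP[hw hc].
have -> : ((m0 + i0 + i.-1)%N, i.-1.+1) = (m, i).
  by move: ha hw; rewrite /is_part /wdiff /= => /andP[? ?] /eqP ?; congr (_, _); lia.
by rewrite IH.
Qed.

Lemma decode_code (p : seq part) : psi10_partition p -> decode (code p) = p.
Proof.
case: p => [|[m i] p] //.
rewrite /psi10_partition /ncopy_partition /=.
move=> /and3P[/andP[/andP[ha hp] _] hc /eqP hdiag].
have -> : (i.-1.+1, i.-1.+1) = (m, i).
  by move: ha; rewrite /is_part /= => /andP[? ?]; congr (_, _); lia.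
by rewrite decode_from_code.
Qed.

Lemma code_bounded_by_weight (p : seq part) : all is_part p ->
  (size (code p) <= weight p) && all (fun d => d < (weight p).+1) (code p).
Proof.
elim: p => [|[m i] p IH] //= /andP[ha /IH /andP[hs hall]].
rewrite weight_cons /=; move: ha; rewrite /is_part /= => /andP[i0 im].
apply/and3P; split; [lia | lia |].
by apply: sub_all hall => d /=; lia.
Qed.

End Coding.

Section BoundedCodes.

Fixpoint codes_of_size (n B : nat) : seq (seq nat) :=
  if n is n'.+1 then [seq k :: s | k <- iota 0 B, s <- codes_of_size n' B]
  else [:: [::]].

Lemma mem_codes_of_size (n B : nat) (s : seq nat) :
  (s \in codes_of_size n B) = (size s == n) && all (fun k => k < B) s.
Proof.
elim: n s => [|n IH] [|k s] //=.
  by apply/negbTE/allpairsPdep => -[x [y [_ _]]].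
rewrite eqSS; apply/allpairsPdep/and3P.
  case=> x [y [hx hy [-> ->]]]; move: hy hx; rewrite IH mem_iota.
  by case/andP=> ? ? ?; split=> //; lia.
case=> hs hk hall; exists k, s; split=> //; last by rewrite IH hs.
by rewrite mem_iota; lia.
Qed.

Lemma uniq_codes_of_size (n B : nat) : uniq (codes_of_size n B).
Proof.
elim: n => [|n IH] //=; apply: allpairs_uniq => //; first exact: iota_uniq.
by move=> [x1 y1] [x2 y2] _ _ /= [-> ->].
Qed.

Definition bounded_codes (N : nat) : seq (seq nat) :=
  [seq s | n <- iota 0 N.+1, s <- codes_of_size n N.+1].

Lemma mem_bounded_codes (N : nat) (s : seq nat) :
  (s \in bounded_codes N) = (size s <= N) && all (fun k => k < N.+1) s.
Proof.
apply/allpairsPdep/andP.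
  case=> n [t [hn + ->]]; rewrite mem_codes_of_size => /andP[/eqP sz ->].
  by move: hn; rewrite mem_iota sz; split=> //; lia.
case=> hs hall; exists (size s), s; rewrite mem_codes_of_size eqxx hall mem_iota.
by split=> //; lia.
Qed.

Lemma uniq_bounded_codes (N : nat) : uniq (bounded_codes N).
Proof.
apply: allpairs_uniq_dep; first exact: iota_uniq.
  by move=> n _; exact: uniq_codes_of_size.
move=> _ _ /allpairsPdep[n1 [s1 [_ h1 ->]]] /allpairsPdep[n2 [s2 [_ h2 ->]]] /= eq_s.
by move: h1 h2; rewrite !mem_codes_of_size eq_s => /andP[/eqP <- _] /andP[/eqP <- _].
Qed.

End BoundedCodes.

Section SeriesCoefficient.

Local Open Scope ring_scope.

(* Expanding the truncated product 1/(q;q^2)_n as a sum over codes of length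
   n: choosing the exponent k of q^(2j+1) in factor j yields the code entry
   k at position n-1-j, counted 2j+1 times in code_excess. *)
Lemma prod_geom_codes (n B : nat) :
  \prod_(j < n) \sum_(k < B) 'X^((2 * j + 1) * k) =
  \sum_(s <- codes_of_size n B) ('X^(code_excess s) : {poly int}).
Proof.
elim: n => [|n IH]; first by rewrite big_ord0 big_seq1.
rewrite big_ord_recr /= IH big_allpairs_dep /= mulr_suml.
rewrite -(big_mkord xpredT (fun k => 'X^((2 * n + 1) * k))) /index_iota subn0.
rewrite (eq_bigr (fun s => \sum_(k <- iota 0 B)
  'X^(code_excess s) * 'X^((2 * n + 1) * k))); last by move=> s _; rewrite mulr_sumr.
rewrite exchange_big /=; apply: eq_bigr => k _.
rewrite big_seq [RHS]big_seq; apply: eq_bigr => s.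
by rewrite mem_codes_of_size => /andP[/eqP hs _]; rewrite -exprD hs mulnC addnC.
Qed.

Lemma coef_sum_monomials (L : seq (seq nat)) (e : seq nat -> nat) (M : nat) :
  (\sum_(s <- L) ('X^(e s) : {poly int}))`_M = Posz (count (fun s => e s == M)%N L).
Proof.
rewrite coef_sum; elim: L => [|x L IH]; first by rewrite big_nil.
by rewrite big_cons IH coefXn /= eq_sym; case: (e x == M)%N.
Qed.

Lemma psi10_trunc_codes (N : nat) :
  psi10_trunc N = \sum_(s <- bounded_codes N) 'X^(code_weight s).
Proof.
rewrite /psi10_trunc /bounded_codes big_allpairs_dep /=.
rewrite -(big_mkord xpredT (fun n => 'X^('C(n.+1, 2)) *
  \prod_(j < n) \sum_(k < N.+1) 'X^((2 * j + 1) * k))) /index_iota subn0.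
apply: eq_bigr => n _; rewrite prod_geom_codes mulr_sumr.
rewrite big_seq [RHS]big_seq; apply: eq_bigr => s.
by rewrite mem_codes_of_size /code_weight => /andP[/eqP -> _]; rewrite exprD.
Qed.

Lemma psi10_coeff_count (N : nat) :
  psi10_coeff N = Posz (count (fun s => code_weight s == N) (bounded_codes N)).
Proof. by rewrite /psi10_coeff psi10_trunc_codes coef_sum_monomials. Qed.

End SeriesCoefficient.

Lemma mem_decode_codes (N : nat) (p : seq part) :
  (p \in [seq decode s | s <- bounded_codes N & code_weight s == N]) =
  psi10_partition p && (weight p == N).
Proof.
apply/mapP/andP.
  case=> s; rewrite mem_filter => /andP[hw _] ->.
  by split; [exact: decode_ok | rewrite weight_decode].
case=> hp /eqP hw; exists (code p); last by rewrite decode_code.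
have /andP[hsize hall] : (size (code p) <= weight p) &&
    all (fun d => d < (weight p).+1) (code p).
  by apply: code_bounded_by_weight; case/and3P: hp => /andP[].
by rewrite mem_filter -weight_decode decode_code // hw eqxx mem_bounded_codes -hw hsize.
Qed.

Theorem theorem26 (N : nat) :
  exists s : seq (seq part),
    [/\ uniq s,
        (forall p : seq part, p \in s = psi10_partition p && (weight p == N))
      & psi10_coeff N = Posz (size s)].
Proof.
exists [seq decode s | s <- bounded_codes N & code_weight s == N]; split.
- rewrite map_inj_in_uniq ?filter_uniq ?uniq_bounded_codes //.
  by move=> s t _ _ eq_st; rewrite -(code_decode s) -(code_decode t) eq_st.
- exact: mem_decode_codes.
- by rewrite psi10_coeff_count size_map size_filter.
Qed.
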